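(* Let $w \in \mathfrak{S}_n$ be a prism and let $i \in \textsf{supp}(w)$ be unconfined in the reduced words of $w$, with $|\{i-1,i+1\} \cap \textsf{supp}(w)| \le 1$. If $i+1 \notin \textsf{supp}(w)$, then $w$ contains the calibrated mesh pattern $(21, \{(0,1),(1,1),(2,1)\})$ with calibration $x_2 = i+1$, $y_2 = i+1$, or the calibrated mesh pattern $(21, \{(1,0),(1,1),(1,2)\})$ with calibration $x_2 = i+1$, $y_2 = i+1$. If $i-1 \notin \textsf{supp}(w)$, then $w$ contains the calibrated mesh pattern $(21, \{(0,1),(1,1),(2,1)\})$ with calibration $x_1 = i$, $y_1 = i$, or the calibrated mesh pattern $(21, \{(1,0),(1,1),(1,2)\})$ with calibration $x_1 = i$, $y_1 = i$.
   Context: Reduced words, support, Bruhat order: $\sigma_i$ swaps $i,i+1$; a reduced word of $w$ is a minimal-length word $i_1\cdots i_\ell$ with $w=\sigma_{i_1}\cdots\sigma_{i_\ell}$; $\textsf{supp}(w)$ is the set of letters in any reduced word; $u\preceq w$ iff a reduced word of $u$ is a subword of one of $w$; $B(w)=\{u:u\preceq w\}$; $w$ is a prism if $B(w)\cong\mathbf{2}\times X$ for some poset $X$ ($\mathbf{2}$ the two-element chain). A letter $i$ appearing exactly once in a reduced word $s$ is unconfined in $s$ if that occurrence is neither between two $i+1$'s nor between two $i-1$'s; this then holds in all reduced words of $w$. Calibrated mesh patterns: let $p \in \mathfrak{S}_k$ and $M \subseteq \{0,\dots,k\}^2$ (cell $(a,b)$ is the unit square with lower-left corner $(a,b)$ in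 the grid $[0,k+1]^2$ containing the graph $\{(j,p(j))\}$ of $p$). An occurrence of $p$ in $w \in \mathfrak{S}_n$ is a choice of positions $x_1<\cdots<x_k$ such that $w(x_1)\cdots w(x_k)$ is in the same relative order as $p(1)\cdots p(k)$; let $y_1<\cdots<y_k$ be the values $\{w(x_1),\dots,w(x_k)\}$ in increasing order, and set $x_0=y_0=0$, $x_{k+1}=y_{k+1}=n+1$. Such an occurrence is an occurrence of the mesh pattern $(p,M)$ if for every $(a,b)\in M$ there is no $x$ with $x_a < x < x_{a+1}$ and $y_b < w(x) < y_{b+1}$. A calibrated mesh pattern additionally prescribes values for some of the $x_a$ and $y_b$; $w$ contains it if $w$ has an occurrence of $(p,M)$ meeting those prescriptions. Here $21\in\mathfrak{S}_2$ is the permutation $2\,1$. *)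

From HB Require Import structures.
From mathcomp Require Import all_boot all_order all_fingroup.
Set Implicit Arguments. Unset Strict Implicit. Unset Printing Implicit Defensive.
Import Order.TTheory.

(* Permutations of {1,...,n} are represented by w : {perm 'I_n}, where the
   value i+1 corresponds to the ordinal i.  [pv w x] is w(x) for 1 <= x <= n
   (and 0 outside that range). *)
Definition pv (n : nat) (w : {perm 'I_n}) (x : nat) : nat :=
  if 0 < x then oapp (fun j : 'I_n => (w j).+1) 0 (insub x.-1) else 0.

(* The simple transposition sigma_i, swapping the values i and i+1
   (1 <= i <= n-1); identity for out-of-range letters (never used since
   words are required to have valid letters). *)
Definition sgen (n : nat) (i : nat) : {perm 'I_n} :=
  match insub i.-1, insub i with
  | Some a, Some b => tperm a b
  | _, _ => 1%g
  end.

Definition valid_word (n : nat) (s : seq nat) : bool :=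
  all (fun i => (0 < i) && (i < n)) s.

Definition word_prod (n : nat) (s : seq nat) : {perm 'I_n} :=
  (\prod_(i <- s) sgen n i)%g.

Definition is_word (n : nat) (w : {perm 'I_n}) (s : seq nat) : Prop :=
  valid_word n s /\ word_prod n s = w.

Definition reduced (n : nat) (w : {perm 'I_n}) (s : seq nat) : Prop :=
  is_word w s /\ forall t, is_word w t -> size s <= size t.

(* support: letters occurring in (some, equivalently every) reduced word *)
Definition supp (n : nat) (w : {perm 'I_n}) (i : nat) : Prop :=
  exists s, reduced w s /\ i \in s.

Definition bruhat (n : nat) (u w : {perm 'I_n}) : Prop :=
  exists su sw, [/\ reduced u su, reduced w sw & subseq su sw].

(* w is a prism: B(w) = {u | u <= w} is isomorphic, as a poset, to 2 x X
   for some poset X (2 = the chain false < true, product order). *)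
Definition prism (n : nat) (w : {perm 'I_n}) : Prop :=
  exists (d : Order.disp_t) (X : porderType d)
         (f : {u : {perm 'I_n} | bruhat u w} -> bool * X),
    bijective f /\
    forall u v, bruhat (sval u) (sval v) <->
      (((f u).1 ==> (f v).1) && ((f u).2 <= (f v).2)%O).

Definition unconfined (s : seq nat) (i : nat) : bool :=
  let k := index i s in
  [&& count_mem i s == 1,
      ~~ ((i.+1 \in take k s) && (i.+1 \in drop k.+1 s)) &
      ~~ ((i.-1 \in take k s) && (i.-1 \in drop k.+1 s))].

(* Mesh patterns.  p : one-line notation of a pattern in S_k (values 1..k),
   M : set of cells (a,b), xs : chosen positions x_1 < ... < x_k.
   [xext xs a] is x_a with x_0 = 0, x_{k+1} = n+1; [yext w xs b] is y_b
   (b-th smallest value of the occurrence), with y_0 = 0, y_{k+1} = n+1. *)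
Definition xext (n : nat) (xs : seq nat) (a : nat) : nat :=
  nth n.+1 (0 :: xs) a.

Definition yext (n : nat) (w : {perm 'I_n}) (xs : seq nat) (b : nat) : nat :=
  nth n.+1 (0 :: sort leq (map (pv w) xs)) b.

Definition mesh_occurrence (n : nat) (w : {perm 'I_n}) (p : seq nat)
    (M : seq (nat * nat)) (xs : seq nat) : Prop :=
  [/\ size xs = size p, sorted ltn xs, all (fun x => (0 < x) && (x <= n)) xs,
      (forall a b, a < size p -> b < size p ->
         (nth 0 p a < nth 0 p b) = (pv w (nth 0 xs a) < pv w (nth 0 xs b))) &
      (forall c, c \in M -> forall x,
         ~ ((xext n xs c.1 < x < xext n xs c.1.+1) /\
            (yext w xs c.2 < pv w x < yext w xs c.2.+1)))].

(* w contains the calibrated mesh pattern (p, M) with prescriptions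
   x_a = v for (a,v) in cx and y_b = v for (b,v) in cy. *)
Definition contains_cmesh (n : nat) (w : {perm 'I_n}) (p : seq nat)
    (M : seq (nat * nat)) (cx cy : seq (nat * nat)) : Prop :=
  exists xs, [/\ mesh_occurrence w p M xs,
    (forall c, c \in cx -> xext n xs c.1 = c.2) &
    (forall c, c \in cy -> yext w xs c.1 = c.2)].

Definition mesh_row : seq (nat * nat) := [:: (0, 1); (1, 1); (2, 1)].
Definition mesh_col : seq (nat * nat) := [:: (1, 0); (1, 1); (1, 2)].

From mathcomp Require Import all_boot all_order all_fingroup zify.
Set Implicit Arguments. Unset Strict Implicit. Unset Printing Implicit Defensive.

(* Say that w is prefix-stable at j when it maps {1, ..., j} into itself.  Peeling
   adjacent descents off w gives a reduced word of length inv(w) whose letters are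
   exactly the j at which w is not prefix-stable; so j is outside supp(w) iff w is
   prefix-stable at j.

   Suppose i+1 is outside the support, so w is prefix-stable at i+1, and let w(b) = i+1.
   Unconfinedness forces w not to be prefix-stable at i, whence b <= i.  If b < i and
   w(i+1) <> i, then w = s_b s_(b+1) ... s_i Q with lengths adding up, where Q(i) = w(i+1)
   < i makes Q non-prefix-stable at i-1; appending a reduced word of Q to s_b ... s_i
   yields a reduced word of w with i between two letters i-1, a contradiction.  Hence
   w(i+1) = i or w(i) = i+1, and the corresponding 21-occurrence has an empty shaded
   row or column because its two values or two positions are adjacent.  The case of
   i-1 is the mirror image. *)

Section Values.
Variable n : nat.
Implicit Types (P : {perm 'I_n}) (j x y : nat) (s t : seq nat).

Lemma pvE P (x : 'I_n) : pv P x.+1 = (P x).+1.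
Proof. by rewrite /pv /= valK. Qed.

Lemma pv_out P x : ~~ (0 < x <= n) -> pv P x = 0.
Proof. by case: x => [|x] //= out; rewrite /pv /= insubF //; lia. Qed.

Lemma ord_of_pos x : 0 < x <= n -> {y : 'I_n | x = y.+1}.
Proof. by move=> x_range; have y_lt : x.-1 < n; [lia | exists (Ordinal y_lt) => /=; lia]. Qed.

Lemma pv_gt0 P x : (0 < pv P x) = (0 < x <= n).
Proof.
have [/ord_of_pos [y ->] | x_out] := boolP (0 < x <= n); first by rewrite pvE.
by rewrite pv_out.
Qed.

Lemma pv_inj P x y : 0 < pv P x -> pv P x = pv P y -> x = y.
Proof.
move=> Px_gt0 Pxy.
have x_range : 0 < x <= n by rewrite -(pv_gt0 P).
have y_range : 0 < y <= n by rewrite -(pv_gt0 P) -Pxy.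
case/ord_of_pos: x_range Pxy => a ->; case/ord_of_pos: y_range => b ->.
by rewrite !pvE => -[/val_inj/perm_inj ->].
Qed.

Lemma pv_surj P y : 0 < y <= n -> exists2 x, 0 < x <= n & pv P x = y.
Proof.
case/ord_of_pos=> z ->; exists ((P^-1)%g z).+1; last by rewrite pvE permKV.
by have := ltn_ord ((P^-1)%g z); lia.
Qed.

Lemma pv1 x : 0 < x <= n -> pv (1%g : {perm 'I_n}) x = x.
Proof. by case/ord_of_pos=> y ->; rewrite pvE perm1. Qed.

Definition swap_adj j x := if x == j then j.+1 else if x == j.+1 then j else x.

Lemma swap_adj_l j : swap_adj j j = j.+1.
Proof. by rewrite /swap_adj eqxx. Qed.

Lemma swap_adj_r j : swap_adj j j.+1 = j.
Proof. by rewrite /swap_adj; repeat case: ifP; lia. Qed.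

Lemma swap_adj_id j x : x != j -> x != j.+1 -> swap_adj j x = x.
Proof. by rewrite /swap_adj => /negbTE-> /negbTE->. Qed.

Lemma tperm_val (a b x : 'I_n) : nat_of_ord (tperm a b x) =
  if x == a :> nat then nat_of_ord b else if x == b :> nat then nat_of_ord a else nat_of_ord x.
Proof.
case: tpermP => [->|->|/eqP/negbTE xa /eqP/negbTE xb]; first by rewrite eqxx.
  by case: eqP => [->|]; rewrite ?eqxx.
by rewrite -[x == a :> nat]/(x == a) -[x == b :> nat]/(x == b) xa xb.
Qed.

Lemma sgenE j (j1_lt : j.-1 < n) (j_lt : j < n) :
  sgen n j = tperm (Ordinal j1_lt) (Ordinal j_lt).
Proof.
rewrite /sgen (insubT (fun k => k < n) j1_lt) (insubT (fun k => k < n) j_lt) /=.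
by congr tperm; apply: val_inj.
Qed.

Lemma pv_sgenM j P x : 0 < j < n -> pv (sgen n j * P)%g x = pv P (swap_adj j x).
Proof.
move=> j_range; have j1_lt : j.-1 < n by lia. have j_lt : j < n by lia.
have [x_range | x_out] := boolP (0 < x <= n); last first.
  by rewrite !pv_out // /swap_adj; repeat case: ifP; lia.
case/ord_of_pos: x_range => y ->; rewrite pvE permM (sgenE j1_lt j_lt).
suff -> : swap_adj j y.+1 = (tperm (Ordinal j1_lt) (Ordinal j_lt) y).+1 by rewrite pvE.
by rewrite tperm_val /swap_adj /=; repeat case: ifP; lia.
Qed.

Lemma sgenK j : (sgen n j * sgen n j)%g = 1%g.
Proof.
rewrite /sgen; case: (insub j.-1 : option 'I_n) => [a|]; case: (insub j : option 'I_n) => [b|];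
  by rewrite ?tperm2 ?mulg1.
Qed.

Lemma word_prod_nil : word_prod n [::] = 1%g.
Proof. by rewrite /word_prod big_nil. Qed.

Lemma word_prod_cons j s : word_prod n (j :: s) = (sgen n j * word_prod n s)%g.
Proof. by rewrite /word_prod big_cons. Qed.

Lemma word_prod_cat s t : word_prod n (s ++ t) = (word_prod n s * word_prod n t)%g.
Proof. by rewrite /word_prod big_cat. Qed.

End Values.

Section Inversions.
Variable n : nat.
Implicit Types (P : {perm 'I_n}) (j x y : nat) (s t : seq nat).

Definition inversions P : {set 'I_n * 'I_n} :=
  [set p : 'I_n * 'I_n | (p.1 < p.2) && (P p.2 < P p.1)].

Definition ninv P := #|inversions P|.

Lemma ninv_tperm_adj (a b : 'I_n) P : b = a.+1 :> nat -> P b < P a ->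
  (ninv (tperm a b * P)%g).+1 = ninv P.
Proof.
move=> ab Pba; set t := tperm a b.
have t_mono (x y : 'I_n) : ~ (x = a :> nat /\ y = b :> nat) -> ~ (x = b :> nat /\ y = a :> nat) ->
    (t x < t y) = (x < y).
  by move=> not_ab not_ba; rewrite /t !tperm_val; repeat case: ifP; lia.
have inv_eq : inversions P = (a, b) |: ((fun p => (t p.1, t p.2)) @^-1: inversions (t * P)%g).
  apply/setP => -[x y]; rewrite !inE /= !permM !tpermK.
  have [[-> ->] | not_ab] := eqVneq (x, y) (a, b); first by rewrite Pba ab ltnSn.
  have [[-> ->] | not_ba] := eqVneq (x, y) (b, a).
    by rewrite /t tpermL tpermR ab; lia.
  rewrite (t_mono x y) //.
  - by move=> [/val_inj xa /val_inj yb]; case/eqP: not_ab; rewrite xa yb.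
  - by move=> [/val_inj xb /val_inj ya]; case/eqP: not_ba; rewrite xb ya.
rewrite /ninv inv_eq cardsU1 card_preimset; last first.
  by move=> [x1 y1] [x2 y2] /= [/perm_inj-> /perm_inj->].
by rewrite !inE /= /t tpermL tpermR ab ltnNge leqnSn.
Qed.

Lemma ninv_sgen_desc j P : 0 < j < n -> pv P j.+1 < pv P j ->
  (ninv (sgen n j * P)%g).+1 = ninv P.
Proof.
move=> j_range; have j1_lt : j.-1 < n by lia. have j_lt : j < n by lia.
have -> : pv P j.+1 = (P (Ordinal j_lt)).+1 := pvE P (Ordinal j_lt).
have -> : pv P j = (P (Ordinal j1_lt)).+1 by rewrite -pvE /=; congr pv; lia.
by rewrite (sgenE j1_lt j_lt) ltnS => desc; apply: ninv_tperm_adj => /=; lia.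
Qed.

Lemma ninv_sgen_le j P : 0 < j < n -> ninv (sgen n j * P)%g <= (ninv P).+1.
Proof.
move=> j_range; case: (ltngtP (pv P j.+1) (pv P j)) => [desc|asc|eq].
- by have := ninv_sgen_desc j_range desc; lia.
- have desc : pv (sgen n j * P)%g j.+1 < pv (sgen n j * P)%g j.
    by rewrite !pv_sgenM // swap_adj_l swap_adj_r.
  by have := ninv_sgen_desc j_range desc; rewrite mulgA sgenK mul1g => <-.
- by have := pv_inj (P := P) (x := j.+1) (y := j); rewrite pv_gt0; lia.
Qed.

Lemma ninv1 : ninv 1%g = 0.
Proof. by apply/eqP; rewrite cards_eq0; apply/eqP/setP => p; rewrite !inE !perm1; lia. Qed.

Lemma ninv_word_le t : valid_word n t -> ninv (word_prod n t) <= size t.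
Proof.
elim: t => [|j t IH]; first by rewrite word_prod_nil ninv1.
rewrite /valid_word /= => /andP [j_range t_valid]; rewrite word_prod_cons.
by have := ninv_sgen_le (word_prod n t) j_range; have := IH t_valid; lia.
Qed.

Lemma reduced_of_ninv s P : valid_word n s -> word_prod n s = P -> size s = ninv P -> reduced P s.
Proof.
move=> s_valid sP s_size; split=> [//|t [t_valid tP]].
by rewrite s_size -tP ninv_word_le.
Qed.

Lemma descent_between P x y : 0 < x < y -> y <= n -> pv P y < pv P x ->
  exists2 j, 0 < j < n & pv P j.+1 < pv P j.
Proof.
elim: y => [|y IH] xy y_le inv; first lia.
have [x_eq | x_ne] := eqVneq x y; first by subst x; exists y => //; lia.
case: (ltngtP (pv P y.+1) (pv P y)) => [desc | asc | eq].
- by exists y => //; lia.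
- by apply: IH; lia.
- by have := pv_inj (P := P) (x := y.+1) (y := y); rewrite pv_gt0; lia.
Qed.

Lemma descent_exists P : 0 < ninv P -> exists2 j, 0 < j < n & pv P j.+1 < pv P j.
Proof.
case/card_gt0P => -[x y]; rewrite inE /= => /andP [xy inv].
by apply: (descent_between (x := x.+1) (y := y.+1)); rewrite ?pvE //; have := ltn_ord y; lia.
Qed.

Lemma ninv0_id P : ninv P = 0 -> P = 1%g.
Proof.
move/eqP; rewrite cards_eq0 => /eqP no_inv.
have mono (x y : 'I_n) : x < y -> P x < P y.
  move=> xy; have : (x, y) \notin inversions P by rewrite no_inv inE.
  rewrite inE /= xy /= -leqNgt leq_eqVlt => /orP [/eqP/val_inj/perm_inj yx | //].
  by move: xy; rewrite yx ltnn.
set s := [seq val (P k) | k <- enum 'I_n].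
have s_sorted : sorted ltn s.
  have := iota_ltn_sorted 0 n; rewrite -val_enum_ord !sorted_map.
  by apply: sub_sorted => k l; exact: mono.
have s_mem : s =i iota 0 n.
  move=> z; rewrite mem_iota add0n /=; apply/mapP/idP => [[k _ ->]|]; first exact: ltn_ord.
  move=> z_lt; by exists ((P^-1)%g (Ordinal z_lt)); rewrite ?mem_enum ?permKV.
have s_iota := irr_sorted_eq ltn_trans ltnn s_sorted (iota_ltn_sorted 0 n) s_mem.
apply/permP => k; apply/val_inj; rewrite perm1.
have := congr1 (nth 0 ^~ k) s_iota.
by rewrite (nth_map k) ?size_enum_ord // nth_ord_enum nth_iota.
Qed.

End Inversions.

Section PrefixStability.
Variable n : nat.
Implicit Types (P Q : {perm 'I_n}) (j x : nat) (s t u : seq nat).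

Definition prefix_stable P j := forall x, 0 < x <= j -> pv P x <= j.

Lemma prefix_stable_leP P j x : prefix_stable P j -> 0 < x <= n -> (pv P x <= j) = (x <= j).
Proof.
move=> st x_range; apply/idP/idP => [Px_le|]; last by move=> x_le; apply: st; lia.
rewrite leqNgt; apply/negP => j_lt.
(* Otherwise P would map the j + 1 points x, 1, ..., j into {1, ..., j}. *)
case/ord_of_pos: x_range Px_le j_lt => y -> Px_le j_lt.
have sub : P @: (y |: [set z : 'I_n | z < j]) \subset [set z : 'I_n | z < j].
  apply/subsetP => _ /imsetP [z + ->]; rewrite !inE => /predU1P [-> | z_lt].
    by move: Px_le; rewrite pvE.
  by have := st z.+1; rewrite pvE; lia.
have := subset_leq_card sub; rewrite card_imset; last exact: perm_inj.
by rewrite cardsU1 inE /= (_ : y < j = false) ?add1n ?ltnn //; lia.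
Qed.

Lemma prefix_stable_below P j b x : prefix_stable P j.+1 -> pv P b = j.+1 ->
  0 < x <= j.+1 -> x != b -> pv P x <= j.
Proof.
move=> st Pb x_range /eqP x_b; have := st x x_range.
by rewrite leq_eqVlt => /orP [/eqP Px | //]; case: x_b; apply: (pv_inj (P := P)); rewrite Px ?Pb.
Qed.

Lemma prefix_stable_above P j c x : prefix_stable P j -> pv P c = j.+1 ->
  j < x <= n -> x != c -> j.+1 < pv P x.
Proof.
move=> st Pc x_range /eqP x_c.
have : j < pv P x by have := prefix_stable_leP st (_ : 0 < x <= n); lia.
by rewrite leq_eqVlt => /orP [/eqP Px | //]; case: x_c; apply: (pv_inj (P := P)); rewrite -Px ?Pc.
Qed.

Lemma prefix_stable_ascent P j : prefix_stable P j -> 0 < j < n -> pv P j < pv P j.+1.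
Proof.
move=> st j_range; have := prefix_stable_leP st (x := j.+1); rewrite ltnn.
by have := st j; lia.
Qed.

Lemma prefix_stable_sgenM l j P : 0 < l < n -> l != j ->
  prefix_stable (sgen n l * P)%g j <-> prefix_stable P j.
Proof.
move=> l_range l_j.
suff stM Q : prefix_stable Q j -> prefix_stable (sgen n l * Q)%g j.
  by split=> [/stM | /stM //]; rewrite mulgA sgenK mul1g.
move=> st x x_range; rewrite pv_sgenM //; apply: st.
by rewrite /swap_adj; move/eqP: l_j; repeat case: ifP; lia.
Qed.

Lemma prefix_stable_word t j : valid_word n t -> j \notin t -> prefix_stable (word_prod n t) j.
Proof.
elim: t => [_ _ x x_range | l t IH].
  by rewrite word_prod_nil; case: (boolP (x <= n)) => x_le; [rewrite pv1 | rewrite pv_out]; lia.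
rewrite /valid_word /= in_cons negb_or => /andP [l_range t_valid] /andP [j_l j_t].
by rewrite word_prod_cons prefix_stable_sgenM 1?eq_sym //; exact: IH.
Qed.

Lemma canonical_word P : exists s, [/\ valid_word n s, word_prod n s = P, size s = ninv P &
  forall j, j \in s -> ~ prefix_stable P j].
Proof.
move: {2}(ninv P) (erefl (ninv P)) => m; elim: m P => [|m IH] P ninvP.
  by exists [::]; rewrite word_prod_nil (ninv0_id ninvP) ninv1.
have [j j_range desc] : exists2 j, 0 < j < n & pv P j.+1 < pv P j.
  by apply: descent_exists; rewrite ninvP.
have ninv_jP : ninv (sgen n j * P)%g = m by have := ninv_sgen_desc j_range desc; lia.
have [s [s_valid sP s_size s_unstable]] := IH _ ninv_jP.
exists (j :: s); split.
- by rewrite /valid_word /= j_range.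
- by rewrite word_prod_cons sP mulgA sgenK mul1g.
- by rewrite /= s_size ninv_jP ninvP.
- have no_st : ~ prefix_stable P j by move=> /prefix_stable_ascent/(_ j_range); lia.
  move=> l; rewrite in_cons => /predU1P [-> // | l_s st]; have [l_j | l_j] := eqVneq l j.
    by apply: no_st; rewrite -l_j.
  by apply: (s_unstable l l_s); apply/prefix_stable_sgenM; rewrite // eq_sym.
Qed.

Lemma reduced_cat_canonical u P Q : valid_word n u -> P = (word_prod n u * Q)%g ->
  ninv Q + size u = ninv P ->
  exists t, reduced P (u ++ t) /\ forall j, j \in t <-> ~ prefix_stable Q j.
Proof.
move=> u_valid PuQ ninvQ; have [t [t_valid tQ t_size t_unstable]] := canonical_word Q.
exists t; split.
  apply: reduced_of_ninv.
  - by move: u_valid t_valid; rewrite /valid_word all_cat => -> ->.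
  - by rewrite word_prod_cat tQ.
  - by rewrite size_cat t_size; lia.
move=> j; split=> [/t_unstable // | not_st]; apply/negPn/negP => j_t.
by apply: not_st; rewrite -tQ; exact: prefix_stable_word.
Qed.

Lemma supp_range P i : supp P i -> 0 < i < n.
Proof. by case=> s [[[/allP s_valid _] _] /s_valid]. Qed.

Lemma prefix_stable_of_not_supp P j : ~ supp P j -> prefix_stable P j.
Proof.
move=> not_supp; have [s [s_valid sP s_size _]] := canonical_word P.
rewrite -sP; apply: prefix_stable_word => //; apply/negP => j_s.
by apply: not_supp; exists s; split=> //; exact: reduced_of_ninv.
Qed.

End PrefixStability.

Lemma not_unconfined_rcons_cat u t i j : i \notin u -> j \in u -> j \in t ->
  (j == i.-1) || (j == i.+1) -> ~~ unconfined (rcons u i ++ t) i.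
Proof.
move=> i_u j_u j_t ij; rewrite /unconfined cat_rcons index_cat (negbTE i_u) /= eqxx addn0.
rewrite take_size_cat // drop_cat ltnNge leqnSn /= subSnn /= drop0.
by case/orP: ij => /eqP <-; rewrite j_u j_t /= ?andbF.
Qed.

Section Factorizations.
Variable n : nat.
Implicit Types (P Q : {perm 'I_n}) (x : nat).

Lemma factor_iota_word k P b : 0 < b -> b + k <= n ->
  (forall x, b < x <= b + k -> pv P x < pv P b) ->
  exists Q, [/\ P = (word_prod n (iota b k) * Q)%g, ninv Q + k = ninv P,
    forall x, b <= x < b + k -> pv Q x = pv P x.+1 &
    forall x, x < b \/ b + k < x -> pv Q x = pv P x].
Proof.
elim: k P b => [|k IH] P b b_pos bk_le desc.
  by exists P; split=> [||x|//]; rewrite ?word_prod_nil ?mul1g ?addn0 //; lia.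
have b_range : 0 < b < n by lia.
have desc_b : pv P b.+1 < pv P b by apply: desc; lia.
set P' := (sgen n b * P)%g.
have desc' x : b.+1 < x <= b.+1 + k -> pv P' x < pv P' b.+1.
  by move=> x_range; rewrite !pv_sgenM // swap_adj_r swap_adj_id; [apply: desc | ..]; lia.
have [Q [P'Q ninvQ Qmid Qout]] := IH P' b.+1 (ltn0Sn b) (ltac:(lia)) desc'.
exists Q; split.
- by rewrite /= word_prod_cons -mulgA -P'Q /P' mulgA sgenK mul1g.
- by have := ninv_sgen_desc b_range desc_b; rewrite -/P'; lia.
- move=> x x_range; have [-> | x_b] := eqVneq x b.
    by rewrite Qout; [rewrite pv_sgenM // swap_adj_l | lia].
  by rewrite Qmid; [rewrite pv_sgenM // swap_adj_id | ..]; lia.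
- by move=> x x_out; rewrite Qout; [rewrite pv_sgenM // swap_adj_id | ..]; lia.
Qed.

Lemma factor_rev_iota_word k P d : 0 < d -> d + k <= n ->
  (forall x, d <= x < d + k -> pv P (d + k) < pv P x) ->
  exists Q, [/\ P = (word_prod n (rev (iota d k)) * Q)%g, ninv Q + k = ninv P,
    forall x, d <= x < d + k -> pv Q x.+1 = pv P x &
    forall x, x < d \/ d + k < x -> pv Q x = pv P x].
Proof.
elim: k P => [|k IH] P d_pos dk_le desc.
  by exists P; split=> [||x|//]; rewrite ?word_prod_nil ?mul1g ?addn0 //; lia.
have j_range : 0 < d + k < n by lia.
have desc_j : pv P (d + k).+1 < pv P (d + k) by rewrite -addnS; apply: desc; lia.
set P' := (sgen n (d + k) * P)%g.
have desc' x : d <= x < d + k -> pv P' (d + k) < pv P' x.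
  by move=> x_range; rewrite !pv_sgenM // swap_adj_l swap_adj_id -?addnS; [apply: desc | ..]; lia.
have [Q [P'Q ninvQ Qmid Qout]] := IH P' d_pos (ltac:(lia)) desc'.
exists Q; split.
- rewrite -addn1 iotaD rev_cat /= word_prod_cons -mulgA -P'Q.
  by rewrite /P' mulgA sgenK mul1g.
- by have := ninv_sgen_desc j_range desc_j; rewrite -/P'; lia.
- move=> x x_range; have [-> | x_j] := eqVneq x (d + k).
    by rewrite Qout; [rewrite pv_sgenM // swap_adj_r | lia].
  by rewrite Qmid; [rewrite pv_sgenM // swap_adj_id | ..]; lia.
- by move=> x x_out; rewrite Qout; [rewrite pv_sgenM // swap_adj_id | ..]; lia.
Qed.

End Factorizations.

Section Unconfined.
Variables (n i : nat) (w : {perm 'I_n}).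
Hypothesis i_range : 0 < i < n.
Hypothesis unconf : forall s, reduced w s -> unconfined s i.

Lemma unconfined_not_stable : ~ prefix_stable w i.
Proof.
have [s [s_valid sw s_size s_unstable]] := canonical_word w.
have := unconf (reduced_of_ninv s_valid sw s_size).
by case/and3P=> /eqP count1 _ _; apply: s_unstable; rewrite -has_pred1 has_count count1.
Qed.

Lemma unconfined_stable_succ : prefix_stable w i.+1 -> pv w i.+1 = i \/ pv w i = i.+1.
Proof.
move=> st.
have [b b_range wb] : exists2 b, 0 < b <= n & pv w b = i.+1 by apply: pv_surj; lia.
have below x : 0 < x <= i.+1 -> x != b -> pv w x <= i := prefix_stable_below st wb.
have b_le : b <= i.+1 by rewrite -(prefix_stable_leP st b_range) wb.
have b_ne : b != i.+1.
  by apply/eqP => b_i1; apply: unconfined_not_stable => x x_range; apply: below; lia.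
have [b_i | b_ne_i] := eqVneq b i; first by right; subst b.
have [| wi1] := eqVneq (pv w i.+1) i; first by left.
exfalso.
have desc x : b < x <= b + (i.+1 - b) -> pv w x < pv w b.
  by move=> x_range; rewrite wb ltnS below //; lia.
have b_pos : 0 < b by lia.
have bk_le : b + (i.+1 - b) <= n by lia.
have [Q [wQ ninvQ Qmid _]] := factor_iota_word b_pos bk_le desc.
have Q_unstable : ~ prefix_stable Q i.-1.
  move=> st'; have := prefix_stable_leP st' (_ : 0 < i <= n).
  by rewrite Qmid; [have := below i.+1 | ]; lia.
have u_valid : valid_word n (iota b (i.+1 - b)) by apply/allP => x; rewrite mem_iota; lia.
rewrite -(size_iota b (i.+1 - b)) in ninvQ.
have [t [red t_unstable]] := reduced_cat_canonical u_valid wQ ninvQ.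
have u_rcons : iota b (i.+1 - b) = rcons (iota b (i - b)) i.
  by rewrite -cats1 (_ : i.+1 - b = i - b + 1) ?iotaD ?subnKC //; lia.
move: (unconf red); rewrite u_rcons; apply/negP/(not_unconfined_rcons_cat (j := i.-1)).
- by rewrite mem_iota; lia.
- by rewrite mem_iota; lia.
- exact/t_unstable.
- by rewrite eqxx.
Qed.

Lemma unconfined_stable_pred : prefix_stable w i.-1 -> pv w i = i.+1 \/ pv w i.+1 = i.
Proof.
move=> st.
have [c c_range wc] : exists2 c, 0 < c <= n & pv w c = i by apply: pv_surj; lia.
have wc' : pv w c = i.-1.+1 by rewrite wc; lia.
have above x : i.-1 < x <= n -> x != c -> i.-1.+1 < pv w x := prefix_stable_above st wc'.
have c_gt : i.-1 < c by rewrite ltnNge -(prefix_stable_leP st c_range) wc; lia.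
have c_ne : c != i.
  apply/eqP => c_i; apply: unconfined_not_stable => x x_range.
  by have [-> | x_ne] := eqVneq x i; [subst c; rewrite wc | have := st x; lia].
have [c_i1 | c_ne_i1] := eqVneq c i.+1; first by right; subst c.
have [| wi] := eqVneq (pv w i) i.+1; first by left.
exfalso.
have desc x : i <= x < i + (c - i) -> pv w (i + (c - i)) < pv w x.
  by move=> x_range; rewrite subnKC ?wc; [have := above x | ]; lia.
have i_pos : 0 < i by lia.
have ik_le : i + (c - i) <= n by lia.
have [Q [wQ ninvQ Qmid _]] := factor_rev_iota_word i_pos ik_le desc.
have Q_unstable : ~ prefix_stable Q i.+1.
  by move=> st'; have := st' i.+1; rewrite Qmid; [have := above i | ]; lia.
have u_valid : valid_word n (rev (iota i (c - i))).
  by apply/allP => x; rewrite mem_rev mem_iota; lia.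
rewrite -(size_iota i (c - i)) -size_rev in ninvQ.
have [t [red t_unstable]] := reduced_cat_canonical u_valid wQ ninvQ.
have u_rcons : rev (iota i (c - i)) = rcons (rev (iota i.+1 (c - i).-1)) i.
  by rewrite -rev_cons (_ : c - i = (c - i).-1.+1) //; lia.
move: (unconf red); rewrite u_rcons; apply/negP/(not_unconfined_rcons_cat (j := i.+1)).
- by rewrite mem_rev mem_iota; lia.
- by rewrite mem_rev mem_iota; lia.
- exact/t_unstable.
- by rewrite eqxx orbT.
Qed.

End Unconfined.

Section Patterns.
Variables (n : nat) (w : {perm 'I_n}).

Lemma yext21 x1 x2 b : pv w x2 < pv w x1 ->
  yext w [:: x1; x2] b = nth n.+1 [:: 0; pv w x2; pv w x1] b.
Proof. by move=> desc; rewrite /yext /= /sort /= leqNgt desc. Qed.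

Lemma mesh_occurrence21 M x1 x2 : 0 < x1 < x2 -> x2 <= n -> pv w x2 < pv w x1 ->
  (forall c, c \in M -> forall x,
     ~ ((xext n [:: x1; x2] c.1 < x < xext n [:: x1; x2] c.1.+1) /\
        (yext w [:: x1; x2] c.2 < pv w x < yext w [:: x1; x2] c.2.+1))) ->
  mesh_occurrence w [:: 2; 1] M [:: x1; x2].
Proof.
move=> x_lt x2_le desc empty; split=> //=; rewrite ?andbT; try lia.
by move=> [|[|a]] [|[|b]] //= _ _; lia.
Qed.

Lemma contains_row21 x1 x2 v cx cy : 0 < x1 < x2 -> x2 <= n ->
  pv w x1 = v.+1 -> pv w x2 = v ->
  {subset cx <= [:: (1, x1); (2, x2)]} -> {subset cy <= [:: (1, v); (2, v.+1)]} ->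
  contains_cmesh w [:: 2; 1] mesh_row cx cy.
Proof.
move=> x_lt x2_le wx1 wx2 cx_sub cy_sub.
have desc : pv w x2 < pv w x1 by rewrite wx1 wx2.
exists [:: x1; x2]; split.
- apply: mesh_occurrence21 => // c; rewrite !inE => /or3P [] /eqP -> x;
    by rewrite ?yext21 //= wx1 wx2; lia.
- by move=> c /cx_sub; rewrite !inE => /orP [] /eqP ->.
- by move=> c /cy_sub; rewrite !inE => /orP [] /eqP ->; rewrite yext21 //= ?wx1 ?wx2.
Qed.

Lemma contains_col21 x cx cy : 0 < x < n -> pv w x.+1 < pv w x ->
  {subset cx <= [:: (1, x); (2, x.+1)]} ->
  {subset cy <= [:: (1, pv w x.+1); (2, pv w x)]} ->
  contains_cmesh w [:: 2; 1] mesh_col cx cy.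
Proof.
move=> x_range desc cx_sub cy_sub; exists [:: x; x.+1]; split.
- apply: mesh_occurrence21 => //; try lia.
  by move=> c; rewrite !inE => /or3P [] /eqP -> y; rewrite /xext /=; lia.
- by move=> c /cx_sub; rewrite !inE => /orP [] /eqP ->.
- by move=> c /cy_sub; rewrite !inE => /orP [] /eqP ->; rewrite yext21.
Qed.

End Patterns.

Section StablePatterns.
Variables (n i : nat) (w : {perm 'I_n}).
Hypothesis i_range : 0 < i < n.

Lemma contains_cmesh_succ : prefix_stable w i.+1 -> pv w i.+1 = i \/ pv w i = i.+1 ->
  contains_cmesh w [:: 2; 1] mesh_row [:: (2, i.+1)] [:: (2, i.+1)] \/
  contains_cmesh w [:: 2; 1] mesh_col [:: (2, i.+1)] [:: (2, i.+1)].
Proof.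
move=> st [w_i1 | w_i]; [left | right].
- have [b b_range wb] : exists2 b, 0 < b <= n & pv w b = i.+1 by apply: pv_surj; lia.
  have b_le : b <= i.+1 by rewrite -(prefix_stable_leP st b_range) wb.
  have b_ne : b != i.+1 by apply/eqP => b_i1; move: w_i1; rewrite -b_i1 wb; lia.
  apply: (contains_row21 (x1 := b) (x2 := i.+1) (v := i)); try lia;
    by move=> c; rewrite !inE => /eqP ->; rewrite eqxx ?orbT.
- have w_i1 : pv w i.+1 < i.+1.
    by have := st i.+1; have := pv_inj (P := w) (x := i) (y := i.+1); rewrite pv_gt0 w_i; lia.
  apply: (contains_col21 (x := i)); rewrite ?w_i; try lia;
    by move=> c; rewrite !inE => /eqP ->; rewrite eqxx ?orbT.
Qed.

Lemma contains_cmesh_pred : prefix_stable w i.-1 -> pv w i = i.+1 \/ pv w i.+1 = i ->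
  contains_cmesh w [:: 2; 1] mesh_row [:: (1, i)] [:: (1, i)] \/
  contains_cmesh w [:: 2; 1] mesh_col [:: (1, i)] [:: (1, i)].
Proof.
move=> st [w_i | w_i1]; [left | right].
- have [c c_range wc] : exists2 c, 0 < c <= n & pv w c = i by apply: pv_surj; lia.
  have c_gt : i.-1 < c by rewrite ltnNge -(prefix_stable_leP st c_range) wc; lia.
  have c_ne : c != i by apply/eqP => c_i; move: w_i; rewrite -c_i wc; lia.
  apply: (contains_row21 (x1 := i) (x2 := c) (v := i)); try lia;
    by move=> d; rewrite !inE => /eqP ->; rewrite eqxx ?orbT.
- have w_i : i < pv w i.
    have := prefix_stable_leP st (_ : 0 < i <= n).
    by have := pv_inj (P := w) (x := i) (y := i.+1); rewrite pv_gt0 w_i1; lia.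
  apply: (contains_col21 (x := i)); rewrite ?w_i1; try lia;
    by move=> d; rewrite !inE => /eqP ->; rewrite eqxx ?orbT.
Qed.

End StablePatterns.

Theorem proposition3p5 (n : nat) (w : {perm 'I_n}) (i : nat) :
  prism w ->
  supp w i ->
  (forall s, reduced w s -> unconfined s i) ->
  ~ (supp w i.-1 /\ supp w i.+1) ->
  (~ supp w i.+1 ->
     contains_cmesh w [:: 2; 1] mesh_row [:: (2, i.+1)] [:: (2, i.+1)] \/
     contains_cmesh w [:: 2; 1] mesh_col [:: (2, i.+1)] [:: (2, i.+1)]) /\
  (~ supp w i.-1 ->
     contains_cmesh w [:: 2; 1] mesh_row [:: (1, i)] [:: (1, i)] \/
     contains_cmesh w [:: 2; 1] mesh_col [:: (1, i)] [:: (1, i)]).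
Proof.
move=> _ /supp_range i_range unconf _.
split=> /prefix_stable_of_not_supp st.
- exact/(contains_cmesh_succ i_range st)/(unconfined_stable_succ i_range unconf st).
- exact/(contains_cmesh_pred i_range st)/(unconfined_stable_pred i_range unconf st).
Qed.
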